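(* Let $c>0$, $d\ge2$, $m\ge0$, and let $\phi_k$ be a nontrivial real solution bounded on $[-1,1]$ of $$\big((1-\eta)(1+\eta)^{m+\frac d2}\phi_k'(\eta)\big)'+\Big(\alpha_k-\frac{c^2(1+\eta)}{8}\Big)(1+\eta)^{m+\frac d2-1}\phi_k(\eta)=0,\qquad \eta\in(-1,1).$$ If $\alpha_k>\frac{c^2}{4}$, then $$\sup_{\eta\in[a_{m,d},1]}|\phi_k(\eta)|=|\phi_k(1)|,\qquad a_{m,d}=\frac{2m+d-2}{2m+d}.$$
   Context: This is the radial equation of ball prolate spheroidal wave functions $\psi(x)=r^m\phi_k(2r^2-1)Y(\hat x)$, where $\alpha_k=\frac14(\chi^{(m)}_k(c)-m(m+d))$ and $\chi^{(m)}_k(c)$ is the corresponding eigenvalue of $\mathcal{L}_c=-\nabla\cdot(1-\|x\|^2)\nabla-\Delta_0+c^2\|x\|^2$. *)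

From Stdlib Require Import Reals.
From Coquelicot Require Import Coquelicot.
Open Scope R_scope.

Definition pexp (m d : nat) : R := INR m + INR d / 2.

Definition a_md (m d : nat) : R := (2 * INR m + INR d - 2) / (2 * INR m + INR d).

Definition radial_solution (c alpha : R) (m d : nat) (phi : R -> R) : Prop :=
  forall t, -1 < t < 1 ->
    ex_derive phi t /\
    is_derive (fun s => (1 - s) * Rpower (1 + s) (pexp m d) * Derive phi s) t
      (- ((alpha - c ^ 2 * (1 + t) / 8) * Rpower (1 + t) (pexp m d - 1) * phi t)).

From Stdlib Require Import Reals Lra.
From Coquelicot Require Import Coquelicot.
Open Scope R_scope.

(* Write [p = m + d/2] and [g = (1 - s) (1 + s)^p phi'] for the flux, so that the equation
   reads [g' = - (alpha - c^2 (1 + s)/8) (1 + s)^(p-1) phi].  With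
   [H = (1 - s) (alpha - c^2 (1 + s)/8) (1 + s)^(2p-1)], positive since [alpha > c^2/4], the
   energy [phi^2 + g^2 / H] has derivative [- g^2 H' / H^2], and [H' <= 0] exactly for
   [s >= (p-1)/p = a_{m,d}]; so the energy is nondecreasing on [[a_{m,d}, 1)].  Since [phi],
   hence [g'], is bounded, [g] vanishes linearly at [1] (otherwise [phi] would grow like
   [ln (1 - s)]), while [H >= (alpha - c^2/4) (1 - s)]; hence [g^2 / H -> 0] and
   [phi(t)^2 <= lim_{s -> 1} phi(s)^2 = phi(1)^2]. *)

Lemma Rpower_gt_0 (x y : R) : 0 < Rpower x y.
Proof. apply exp_pos. Qed.

Lemma le_of_is_derive_nonneg (f df : R -> R) (x y : R) : x <= y ->
  (forall z, x <= z <= y -> is_derive f z (df z)) ->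
  (forall z, x <= z <= y -> 0 <= df z) -> f x <= f y.
Proof.
intros hxy hd hpos. destruct (Req_dec x y) as [->|hne]; [lra|].
destruct (MVT_cor3 f df x y) as [z [hxz [hzy ->]]]; [lra| |].
- intros z hxz hzy. apply is_derive_Reals, hd. lra.
- assert (0 <= df z) by (apply hpos; lra). nra.
Qed.

Lemma Rabs_sub_le_of_is_derive (f df : R -> R) (x y K : R) : x <= y ->
  (forall z, x <= z <= y -> is_derive f z (df z)) ->
  (forall z, x <= z <= y -> Rabs (df z) <= K) -> Rabs (f y - f x) <= K * (y - x).
Proof.
intros hxy hd hK. destruct (Req_dec x y) as [->|hne].
{ rewrite Rminus_diag, Rabs_R0. assert (0 <= Rabs (df y)) by apply Rabs_pos.
  assert (Rabs (df y) <= K) by (apply hK; lra). nra. }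
destruct (MVT_cor3 f df x y) as [z [hxz [hzy ->]]]; [lra| |].
- intros z hxz hzy. apply is_derive_Reals, hd. lra.
- replace (f x + df z * (y - x) - f x) with (df z * (y - x)) by ring.
  rewrite Rabs_mult, (Rabs_pos_eq (y - x)) by lra.
  assert (Rabs (df z) <= K) by (apply hK; lra). nra.
Qed.

Lemma filter_le_at_left_within (a b : R) : a < b ->
  filter_le (at_left b) (within (fun s => a <= s <= b) (locally b)).
Proof.
intros hab P [e he].
assert (hpos : 0 < Rmin e (b - a)) by (apply Rmin_pos; [apply cond_pos | lra]).
exists (mkposreal _ hpos); intros s hs hsb.
apply he; [|split]; [| |lra].
- apply (ball_le _ (Rmin e (b - a))); [apply Rmin_l | exact hs].
- apply Rabs_lt_between' in hs as [hs _]. pose proof (Rmin_r e (b - a)). simpl in *; lra.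
Qed.

Lemma le_sq_of_left_limit (u : R -> R) (x C t : R) : t < 1 ->
  filterlim u (at_left 1) (locally (u 1)) ->
  (forall s, t < s < 1 -> x <= u s ^ 2 + C * (1 - s)) -> x <= u 1 ^ 2.
Proof.
intros ht hu hle.
assert (hlin : filterlim (fun s => C * (1 - s)) (at_left 1) (locally (C * (1 - 1)))).
{ apply (filterlim_filter_le_1 _ (filter_le_within _)).
  apply (ex_derive_continuous (fun s => C * (1 - s))); auto_derive; easy. }
assert (hsq : filterlim (fun s => u s ^ 2) (at_left 1) (locally (u 1 ^ 2))).
{ apply (filterlim_comp _ _ _ u (fun a => a ^ 2) (at_left 1) (locally (u 1)) _ hu).
  apply (ex_derive_continuous (fun a => a ^ 2)); auto_derive; easy. }
assert (hlim : filterlim (fun s => u s ^ 2 + C * (1 - s)) (at_left 1)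
                 (locally (u 1 ^ 2 + C * (1 - 1))))
  by exact (filterlim_comp_2 _ _ plus hsq hlin (filterlim_plus _ _)).
rewrite Rminus_diag, Rmult_0_r, Rplus_0_r in hlim.
change (Rbar_le x (u 1 ^ 2)).
apply (filterlim_le (F := at_left 1) (fun _ => x) (fun s => u s ^ 2 + C * (1 - s))).
- exists (mkposreal _ (proj2 (Rlt_0_minus _ _) ht)); intros s hs hs1.
  apply hle; split; [|exact hs1].
  apply Rabs_lt_between' in hs as [hs _]; simpl in hs; lra.
- apply filterlim_const.
- exact hlim.
Qed.

Lemma not_bounded_of_derive_ge_inv (f df : R -> R) (t del M : R) : t < 1 -> 0 < del ->
  (forall s, t <= s < 1 -> is_derive f s (df s)) ->
  (forall s, t <= s < 1 -> del <= (1 - s) * df s) ->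
  ~ (forall s, t <= s < 1 -> f s <= M).
Proof.
intros ht hdel hd hge hM.
assert (hft : f t <= M) by (apply hM; lra).
set (N := (M - f t) / del + 1).
assert (hN : 1 <= N) by (unfold N; assert (0 <= (M - f t) / del) by (apply Rdiv_le_0_compat; lra); lra).
set (s := 1 - (1 - t) * exp (- N)).
assert (hexp : exp (- N) < 1) by (rewrite <- exp_0; apply exp_increasing; lra).
assert (hexp0 : 0 < exp (- N)) by apply exp_pos.
assert (hs : t <= s < 1) by (unfold s; split; nra).
(* [f + del * ln (1 - .)] is nondecreasing, and [s] is chosen with [ln (1 - s) = ln (1 - t) - N]. *)
assert (hmono : f t + del * ln (1 - t) <= f s + del * ln (1 - s)).
{ apply (le_of_is_derive_nonneg (fun x => f x + del * ln (1 - x))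
    (fun x => df x - del / (1 - x))); [lra| |].
  - intros z hz. apply (is_derive_plus f (fun x => del * ln (1 - x))); [apply hd; lra|].
    auto_derive; [lra | field; lra].
  - intros z hz. assert (del <= (1 - z) * df z) by (apply hge; lra).
    replace (df z - del / (1 - z)) with (((1 - z) * df z - del) / (1 - z)) by (field; lra).
    apply Rdiv_le_0_compat; lra. }
assert (hln : ln (1 - s) = ln (1 - t) - N).
{ unfold s. replace (1 - (1 - (1 - t) * exp (- N))) with ((1 - t) * exp (- N)) by ring.
  rewrite ln_mult, ln_exp by lra. ring. }
rewrite hln in hmono.
assert (f s <= M) by (apply hM; exact hs).
assert (del * N = M - f t + del) by (unfold N; field; lra).
nra.
Qed.

Lemma div_Rpower_2_le (p s y G : R) : 0 <= p -> -1 < s <= 1 -> 0 < G ->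
  G <= Rpower (1 + s) p * y -> G / Rpower 2 p <= y.
Proof.
intros hp hs hG hle.
assert (hP : 0 < Rpower (1 + s) p) by apply Rpower_gt_0.
assert (hP2 : Rpower (1 + s) p <= Rpower 2 p) by (apply Rle_Rpower_l; lra).
assert (hy : 0 < y) by nra.
apply (Rmult_le_reg_r (Rpower 2 p)); [apply Rpower_gt_0|].
replace (G / Rpower 2 p * Rpower 2 p) with G by (field; apply Rgt_not_eq, Rpower_gt_0).
nra.
Qed.

Definition flux (p : R) (phi : R -> R) (s : R) : R :=
  (1 - s) * Rpower (1 + s) p * Derive phi s.

Lemma Rabs_flux_le (p K M t : R) (phi dg : R -> R) : 0 <= p -> -1 < t < 1 ->
  (forall s, t <= s < 1 -> ex_derive phi s /\ is_derive (flux p phi) s (dg s)) ->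
  (forall s, t <= s < 1 -> Rabs (dg s) <= K) ->
  (forall s, t <= s < 1 -> Rabs (phi s) <= M) ->
  Rabs (flux p phi t) <= 2 * K * (1 - t).
Proof.
intros hp ht hd hK hM.
assert (hK0 : 0 <= K) by (apply (Rle_trans _ (Rabs (dg t))); [apply Rabs_pos | apply hK; lra]).
destruct (Rle_lt_dec (Rabs (flux p phi t)) (2 * K * (1 - t))) as [hle|hgt]; [exact hle|exfalso].
set (G := Rabs (flux p phi t)) in *.
assert (hsg : exists sg, Rabs sg = 1 /\ sg * flux p phi t = G).
{ unfold G; destruct (Rle_lt_dec 0 (flux p phi t)).
  - exists 1. rewrite Rabs_R1, Rabs_pos_eq by lra. split; [reflexivity | ring].
  - exists (-1). rewrite (Rabs_left (-1)), (Rabs_left (flux p phi t)) by lra. split; ring. }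
destruct hsg as [sg [hsg1 hsgG]].
assert (hsg_half : forall s, t <= s < 1 -> G / 2 <= sg * flux p phi s).
{ intros s hs.
  assert (hlip : Rabs (flux p phi s - flux p phi t) <= K * (s - t))
    by (apply (Rabs_sub_le_of_is_derive _ dg); [lra | intros z hz; apply hd | intros z hz; apply hK]; lra).
  assert (hdist : Rabs (sg * flux p phi s - G) <= K * (1 - t)).
  { rewrite <- hsgG, <- Rmult_minus_distr_l, Rabs_mult, hsg1, Rmult_1_l. nra. }
  apply Rabs_le_between' in hdist. lra. }
apply (not_bounded_of_derive_ge_inv (fun x => sg * phi x) (fun x => sg * Derive phi x)
         t (G / (2 * Rpower 2 p)) M); [lra | | | | ].
- assert (0 < Rpower 2 p) by apply Rpower_gt_0.
  apply Rdiv_lt_0_compat; [nra | lra].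
- intros s hs. apply is_derive_scal, Derive_correct, hd; exact hs.
- intros s hs.
  replace (G / (2 * Rpower 2 p)) with (G / 2 / Rpower 2 p)
    by (field; apply Rgt_not_eq, Rpower_gt_0).
  apply (div_Rpower_2_le p s); [lra | lra | nra |].
  eapply Rle_trans; [apply hsg_half, hs | right; unfold flux; ring].
- intros s hs. apply (Rle_trans _ (Rabs (sg * phi s))); [apply Rle_abs|].
  rewrite Rabs_mult, hsg1, Rmult_1_l. apply hM; exact hs.
Qed.

Lemma is_derive_Rpower_shift (q s : R) : -1 < s ->
  is_derive (fun x => Rpower (1 + x) q) s (q * Rpower (1 + s) (q - 1)).
Proof.
intros hs.
assert (hshift : is_derive (fun x => 1 + x) s 1) by (auto_derive; [easy | ring]).
assert (hpow : is_derive (fun y => Rpower y q) (1 + s) (q * Rpower (1 + s) (q - 1)))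
  by (apply is_derive_Reals, derivable_pt_lim_power; lra).
pose proof (is_derive_comp _ _ s _ _ hpow hshift) as hcomp.
replace (q * Rpower (1 + s) (q - 1)) with (scal 1 (q * Rpower (1 + s) (q - 1)))
  by exact (scal_one _).
exact hcomp.
Qed.

Definition lyap_weight (c alpha p s : R) : R :=
  (1 - s) * (alpha - c ^ 2 * (1 + s) / 8) * Rpower (1 + s) (2 * p - 1).

Definition energy (c alpha p : R) (phi : R -> R) (s : R) : R :=
  phi s ^ 2 + flux p phi s ^ 2 / lyap_weight c alpha p s.

Definition lyap_weight_deriv (c alpha p s : R) : R :=
  Rpower (1 + s) (2 * p - 2) *
  ((2 * (p - 1) - 2 * p * s) * (alpha - c ^ 2 * (1 + s) / 8) - (1 - s ^ 2) * c ^ 2 / 8).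

Lemma is_derive_lyap_weight (c alpha p s : R) : -1 < s ->
  is_derive (lyap_weight c alpha p) s (lyap_weight_deriv c alpha p s).
Proof.
intros hs.
assert (hpow : Rpower (1 + s) (2 * p - 1) = (1 + s) * Rpower (1 + s) (2 * p - 2)).
{ replace (2 * p - 1) with (1 + (2 * p - 2)) by ring.
  rewrite Rpower_plus, Rpower_1 by lra. reflexivity. }
pose proof (is_derive_Rpower_shift (2 * p - 1) s hs) as hR.
replace (2 * p - 1 - 1) with (2 * p - 2) in hR by ring.
assert (hpoly : is_derive (fun x => (1 - x) * (alpha - c ^ 2 * (1 + x) / 8)) s
  (- (alpha - c ^ 2 * (1 + s) / 8) - (1 - s) * c ^ 2 / 8)) by (auto_derive; [easy | field]).
pose proof (is_derive_mult _ _ s _ _ hpoly hR Rmult_comm) as hprod.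
lazymatch type of hprod with is_derive _ _ ?l =>
  lazymatch goal with |- is_derive _ _ ?t => replace t with l; [exact hprod|] end end.
unfold lyap_weight_deriv, mult, plus; simpl. rewrite hpow. field.
Qed.

Lemma lyap_weight_deriv_nonpos (c alpha p s : R) : -1 <= s <= 1 -> p - 1 <= p * s ->
  0 <= alpha - c ^ 2 * (1 + s) / 8 -> lyap_weight_deriv c alpha p s <= 0.
Proof.
intros hs hps hw. unfold lyap_weight_deriv.
assert (0 <= 1 - s ^ 2) by nra.
assert (0 <= (1 - s ^ 2) * c ^ 2 / 8)
  by (apply Rdiv_le_0_compat; [apply Rmult_le_pos; [|apply pow2_ge_0] |]; lra).
assert ((2 * (p - 1) - 2 * p * s) * (alpha - c ^ 2 * (1 + s) / 8) <= 0)
  by (apply Rmult_le_0_r; lra).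
assert (0 < Rpower (1 + s) (2 * p - 2)) by apply Rpower_gt_0.
nra.
Qed.

Lemma lyap_weight_ge (c alpha p s : R) : 1 / 2 <= p -> 0 <= s < 1 -> c ^ 2 / 4 < alpha ->
  (alpha - c ^ 2 / 4) * (1 - s) <= lyap_weight c alpha p s.
Proof.
intros hp hs hal. unfold lyap_weight.
assert (hE : 1 <= Rpower (1 + s) (2 * p - 1)).
{ rewrite <- (Rpower_O (1 + s)) at 1 by lra. apply Rle_Rpower; lra. }
assert (hw : alpha - c ^ 2 / 4 <= alpha - c ^ 2 * (1 + s) / 8) by nra.
assert (0 <= (1 - s) * (alpha - c ^ 2 * (1 + s) / 8)) by nra.
nra.
Qed.

Section RadialEquation.

Variables (c alpha p M : R) (phi : R -> R).

Hypothesis hp : 1 <= p.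
Hypothesis halpha : c ^ 2 / 4 < alpha.
Hypothesis hsol : forall t, -1 < t < 1 ->
  ex_derive phi t /\
  is_derive (flux p phi) t (- ((alpha - c ^ 2 * (1 + t) / 8) * Rpower (1 + t) (p - 1) * phi t)).
Hypothesis hM : forall t, -1 <= t <= 1 -> Rabs (phi t) <= M.
Hypothesis hcont : filterlim phi (at_left 1) (locally (phi 1)).

Lemma lyap_weight_gt_0 s : -1 < s < 1 -> 0 < lyap_weight c alpha p s.
Proof.
intros hs. unfold lyap_weight.
assert (0 < Rpower (1 + s) (2 * p - 1)) by apply Rpower_gt_0.
assert (0 < alpha - c ^ 2 * (1 + s) / 8) by nra.
assert (0 < (1 - s) * (alpha - c ^ 2 * (1 + s) / 8)) by nra.
nra.
Qed.

Lemma is_derive_energy s dH : -1 < s < 1 -> is_derive (lyap_weight c alpha p) s dH ->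
  is_derive (energy c alpha p phi) s
    (- (flux p phi s ^ 2 * dH) / lyap_weight c alpha p s ^ 2).
Proof.
intros hs hH.
destruct (hsol s hs) as [hphi hg].
set (dg := - ((alpha - c ^ 2 * (1 + s) / 8) * Rpower (1 + s) (p - 1) * phi s)) in hg.
assert (hHs : lyap_weight c alpha p s <> 0) by (apply Rgt_not_eq, lyap_weight_gt_0, hs).
(* The cross terms cancel because [flux * flux' = - H * phi * phi']. *)
assert (hcross : flux p phi s * dg = - lyap_weight c alpha p s * phi s * Derive phi s).
{ unfold dg, flux, lyap_weight.
  replace (2 * p - 1) with (p + (p - 1)) by ring. rewrite Rpower_plus. ring. }
pose proof (is_derive_plus _ _ s _ _ (is_derive_pow phi 2 s _ (Derive_correct _ _ hphi))
  (is_derive_div _ _ s _ _ (is_derive_pow (flux p phi) 2 s _ hg) hH hHs)) as hE.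
lazymatch type of hE with is_derive _ _ ?l =>
  lazymatch goal with |- is_derive _ _ ?t => replace t with l; [exact hE|] end end.
unfold plus; simpl.
replace ((1 + 1) * dg * (flux p phi s * 1) * lyap_weight c alpha p s)
  with (2 * (flux p phi s * dg) * lyap_weight c alpha p s) by ring.
rewrite hcross. field. exact hHs.
Qed.

Lemma energy_nondecreasing t s : p - 1 <= p * t -> t <= s < 1 ->
  energy c alpha p phi t <= energy c alpha p phi s.
Proof.
intros hpt hts.
assert (ht0 : 0 <= t) by nra.
apply (le_of_is_derive_nonneg _ (fun z => - (flux p phi z ^ 2 * lyap_weight_deriv c alpha p z)
                                          / lyap_weight c alpha p z ^ 2)); [lra| |].
- intros z hz. apply is_derive_energy, is_derive_lyap_weight; lra.
- intros z hz.
  assert (lyap_weight_deriv c alpha p z <= 0)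
    by (apply lyap_weight_deriv_nonpos; nra).
  assert (0 <= flux p phi z ^ 2) by apply pow2_ge_0.
  apply Rdiv_le_0_compat; [nra|].
  pose proof (lyap_weight_gt_0 z ltac:(lra)). nra.
Qed.

Lemma Rabs_flux_le_dist s : 0 <= s < 1 ->
  Rabs (flux p phi s) <= 2 * ((Rabs alpha + c ^ 2) * Rpower 2 (p - 1) * M) * (1 - s).
Proof.
intros hs.
apply (Rabs_flux_le p _ M s phi
  (fun z => - ((alpha - c ^ 2 * (1 + z) / 8) * Rpower (1 + z) (p - 1) * phi z))); [lra|lra| | |].
- intros z hz. apply hsol. lra.
- intros z hz. rewrite Rabs_Ropp, !Rabs_mult.
  assert (hw : Rabs (alpha - c ^ 2 * (1 + z) / 8) <= Rabs alpha + c ^ 2).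
  { apply (Rle_trans _ _ _ (Rabs_triang _ _)). rewrite Rabs_Ropp.
    assert (0 <= c ^ 2) by apply pow2_ge_0.
    rewrite (Rabs_pos_eq (c ^ 2 * (1 + z) / 8)) by (apply Rdiv_le_0_compat; [apply Rmult_le_pos|]; lra). nra. }
  assert (hP : Rabs (Rpower (1 + z) (p - 1)) <= Rpower 2 (p - 1)).
  { rewrite Rabs_pos_eq by (left; apply Rpower_gt_0). apply Rle_Rpower_l; lra. }
  assert (hphi : Rabs (phi z) <= M) by (apply hM; lra).
  apply Rmult_le_compat; [apply Rmult_le_pos; apply Rabs_pos | apply Rabs_pos | | exact hphi].
  apply Rmult_le_compat; [apply Rabs_pos | apply Rabs_pos | exact hw | exact hP].
- intros z hz. apply hM. lra.
Qed.

Lemma energy_le s : 0 <= s < 1 ->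
  energy c alpha p phi s <= phi s ^ 2 +
    4 * ((Rabs alpha + c ^ 2) * Rpower 2 (p - 1) * M) ^ 2 / (alpha - c ^ 2 / 4) * (1 - s).
Proof.
intros hs. unfold energy. apply Rplus_le_compat_l.
set (K := (Rabs alpha + c ^ 2) * Rpower 2 (p - 1) * M).
pose proof (Rabs_flux_le_dist s hs) as hflux. fold K in hflux.
pose proof (lyap_weight_ge c alpha p s ltac:(lra) hs halpha) as hH.
set (H := lyap_weight c alpha p s) in *.
set (G := flux p phi s) in *.
assert (hG2 : G ^ 2 <= 4 * K ^ 2 * (1 - s) ^ 2)
  by (rewrite <- (pow2_abs G); pose proof (Rabs_pos G); nra).
assert (hb : 0 < alpha - c ^ 2 / 4) by lra.
assert (hH0 : 0 < H) by nra.
apply (Rmult_le_reg_r H); [exact hH0|].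
replace (G ^ 2 / H * H) with (G ^ 2) by (field; lra).
replace (4 * K ^ 2 / (alpha - c ^ 2 / 4) * (1 - s) * H)
  with (4 * K ^ 2 * (1 - s) * (H / (alpha - c ^ 2 / 4))) by (field; lra).
assert (hq : 1 - s <= H / (alpha - c ^ 2 / 4)).
{ apply (Rmult_le_reg_r (alpha - c ^ 2 / 4)); [exact hb|].
  replace (H / (alpha - c ^ 2 / 4) * (alpha - c ^ 2 / 4)) with H by (field; lra). lra. }
assert (0 <= 4 * K ^ 2 * (1 - s)) by (assert (0 <= K ^ 2) by apply pow2_ge_0; nra).
nra.
Qed.

Lemma sq_le_sq_at_1 t : p - 1 <= p * t -> t < 1 -> phi t ^ 2 <= phi 1 ^ 2.
Proof.
intros hpt ht.
assert (ht0 : 0 <= t) by nra.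
apply (le_sq_of_left_limit phi (phi t ^ 2)
  (4 * ((Rabs alpha + c ^ 2) * Rpower 2 (p - 1) * M) ^ 2 / (alpha - c ^ 2 / 4)) t ht hcont).
intros s hs.
assert (phi t ^ 2 <= energy c alpha p phi t).
{ unfold energy. pose proof (lyap_weight_gt_0 t ltac:(lra)).
  assert (0 <= flux p phi t ^ 2 / lyap_weight c alpha p t)
    by (apply Rdiv_le_0_compat; [apply pow2_ge_0 | lra]).
  lra. }
pose proof (energy_nondecreasing t s hpt ltac:(lra)).
pose proof (energy_le s ltac:(lra)).
lra.
Qed.

End RadialEquation.

Theorem lemma3p6 (c alpha : R) (d m : nat) (phi : R -> R) :
  0 < c -> (2 <= d)%nat ->
  radial_solution c alpha m d phi ->
  (forall t, -1 <= t <= 1 -> filterlim phi (within (fun s => -1 <= s <= 1) (locally t)) (locally (phi t))) ->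
  (exists M, forall t, -1 <= t <= 1 -> Rabs (phi t) <= M) ->
  (exists t, -1 < t < 1 /\ phi t <> 0) ->
  c ^ 2 / 4 < alpha ->
  is_lub (fun y => exists t, a_md m d <= t <= 1 /\ y = Rabs (phi t)) (Rabs (phi 1)).
Proof.
intros _ hd hsol hcont [M hM] _ halpha.
assert (hm : 0 <= INR m) by apply pos_INR.
assert (hd2 : 2 <= INR d) by (apply (le_INR 2); exact hd).
assert (hp : 1 <= pexp m d) by (unfold pexp; lra).
assert (ha : a_md m d * pexp m d = pexp m d - 1) by (unfold a_md, pexp; field; lra).
assert (hcont1 : filterlim phi (at_left 1) (locally (phi 1)))
  by exact (filterlim_filter_le_1 _ (filter_le_at_left_within (-1) 1 ltac:(lra)) (hcont 1 ltac:(lra))).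
split.
- intros y [t [ht ->]].
  destruct (Req_dec t 1) as [->|ht1]; [lra|].
  apply Rsqr_le_abs_0. unfold Rsqr.
  replace (phi t * phi t) with (phi t ^ 2) by ring. replace (phi 1 * phi 1) with (phi 1 ^ 2) by ring.
  assert (a_md m d * pexp m d <= t * pexp m d) by (apply Rmult_le_compat_r; lra).
  apply (sq_le_sq_at_1 c alpha (pexp m d) M phi hp halpha hsol hM hcont1); [rewrite (Rmult_comm _ t); lra | lra].
- intros b hb. apply hb. exists 1. split; [|reflexivity].
  split; [|lra]. apply (Rmult_le_reg_r (pexp m d)); [lra|]. rewrite ha. lra.
Qed.
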